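(* For every real $n$ with $$1<n<\frac{\sqrt{(1+\sqrt2)/2}+1}{\sqrt{(1+\sqrt2)/2}-1}=21.2666866\ldots,$$ we have $$\sum_{k=0}^\infty\frac{(2(n^2+6n+1)^2(n^2-10n+1)k+P(n))(n-1)^{4k}}{(-n)^k(n+1)^{2k}\binom{4k}{2k}}=6n(n+1)(n-1)^3\log n-32n(n+1)^2(n^2-4n+1),$$ where $P(n)=n^6-58n^5+159n^4+52n^3+159n^2-58n+1$. In particular, \begin{align*} \sum_{k=0}^\infty\frac{2890k-563}{(-18)^k\binom{4k}{2k}}&=-12(\log2+48),\\ \sum_{k=0}^\infty\frac{245k-17}{(-3)^k\binom{4k}{2k}}&=-24-\frac92\log3,\\ \sum_{k=0}^\infty\frac{(77326k+8951)81^k}{(-100)^k\binom{4k}{2k}}&=40(80-81\log4),\\ \sum_{k=0}^\infty\frac{(196k+73)64^k}{(-45)^k\binom{4k}{2k}}&=15(3-\log5),\\ \sum_{k=0}^\infty\frac{(245134k+181679)625^k}{(-294)^k\binom{4k}{2k}}&=84(1456-375\log6),\\ \sum_{k=0}^\infty\frac{(2645k+3517)81^k}{(-28)^k\binom{4k}{2k}}&=7(352-81\log7),\\ \sum_{k=0}^\infty\frac{(127890k+316933)2401^k}{(-648)^k\binom{4k}{2k}}&=144(1584-343\log8),\\ \sum_{k=0}^\infty\frac{(1156k+7031)1024^k}{(-225)^k\binom{4k}{2k}}&=45(115-24\log9),\\ \sum_{k=0}^\infty\frac{(51842k-3142679)6561^k}{(-1210)^k\binom{4k}{2k}}&=220(2187\log10-10736),\\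 \sum_{k=0}^\infty\frac{(2209k-13421)625^k}{(-99)^k\binom{4k}{2k}}&=\frac{99}2(125\log11-624),\\ \sum_{k=0}^\infty\frac{(2354450k-8037191)14641^k}{(-2028)^k\binom{4k}{2k}}&=312(3993\log12-20176),\\ \sum_{k=0}^\infty\frac{(19220k-46979)5184^k}{(-637)^k\binom{4k}{2k}}&=91(81\log13-413),\\ \sum_{k=0}^\infty\frac{(3000515k-5794357)28561^k}{(-3150)^k\binom{4k}{2k}}&=420(2197\log14-11280),\\ \sum_{k=0}^\infty\frac{(118579k-190573)2401^k}{(-240)^k\binom{4k}{2k}}&=30(1029\log15-5312),\\ \sum_{k=0}^\infty\frac{(24174146k-33367199)50625^k}{(-4624)^k\binom{4k}{2k}}&=544(10125\log16-52496),\\ \sum_{k=0}^\infty\frac{(48020k-58117)16384^k}{(-1377)^k\binom{4k}{2k}}&=459(64\log17-333),\\ \sum_{k=0}^\infty\frac{(54371810k-58537799)83521^k}{(-6498)^k\binom{4k}{2k}}&=684(14739\log18-76912),\\ \sum_{k=0}^\infty\frac{(608923k-589327)6561^k}{(-475)^k\binom{4k}{2k}}&=\frac{95}2(2187\log19-11440),\\ \sum_{k=0}^\infty\frac{(36377094k-31893853)130321^k}{(-8820)^k\binom{4k}{2k}}&=840(6859\log20-35952),\\ \sum_{k=0}^\infty\frac{(584756k-467339)40000^k}{(-2541)^k\binom{4k}{2k}}&=231(375\log21-1969),\\ \sum_{k=0}^\infty\frac{(661704134402k-517115569199)43046721^k}{(-2693140)^k\binom{4k}{2k}}&=60520\left(1594323\log\frac{85}4-8374544\right).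 \end{align*}
   Context: $\log$ is the natural logarithm. *)

From Stdlib Require Import Reals.
From Coquelicot Require Import Coquelicot.
Open Scope R_scope.

Definition Ppoly (n : R) : R :=
  n^6 - 58*n^5 + 159*n^4 + 52*n^3 + 159*n^2 - 58*n + 1.

Definition binom4k2k (k : nat) : R := Binomial.C (4*k) (2*k).

Definition upper_bound : R :=
  (sqrt ((1 + sqrt 2) / 2) + 1) / (sqrt ((1 + sqrt 2) / 2) - 1).

Definition term (n : R) (k : nat) : R :=
  ((2 * (n^2 + 6*n + 1)^2 * (n^2 - 10*n + 1) * INR k + Ppoly n) * (n - 1)^(4*k))
  / ((- n)^k * (n + 1)^(2*k) * binom4k2k k).

From Stdlib Require Import Reals Lra Lia Factorial.
From Coquelicot Require Import Coquelicot.
Open Scope R_scope.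

(* Since [1 / binom(4k, 2k) = (4k + 1) * int_0^1 (t (1 - t))^(2k) dt], the k-th
   term is [int_0^1 p(k) w(t)^k dt], where [p(k) = (2 (n^2+6n+1)^2 (n^2-10n+1) k
   + P(n)) (4k + 1)] is quadratic in [k] and [w(t) = - (n-1)^4 (t (1-t))^2 /
   (n (n+1)^2)].  For quadratic [p] the sum [sum_k p(k) w^k] is an explicit
   rational function of [w], and the tail after [N] terms is [O(N^2 q^N)] with
   [q = max |w| = (n-1)^4 / (16 n (n+1)^2)]; the bound on [n] is exactly
   [q < 1].  Hence the series is the integral over [0, 1] of that rational
   function of [w(t)], which has an elementary antiderivative (two logarithms
   and a rational function of [t]). *)

Lemma ex_derive_continuous_R (f : R -> R) (x : R) : ex_derive f x -> continuous f x.
Proof. exact (@ex_derive_continuous R_AbsRing R_NormedModule f x). Qed.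

Lemma is_RInt_derive_R (F f : R -> R) (a b v : R) :
  (forall x, is_derive F x (f x)) -> (forall x, continuous f x) ->
  F b - F a = v -> is_RInt f a b v.
Proof.
intros HF Hf <-.
apply (is_RInt_derive (V := R_CompleteNormedModule)); intros x _; [apply HF | apply Hf].
Qed.

(* Coquelicot states these over an abstract normed module, with [plus] and [scal];
   phrased with [Rplus] and [Rmult], the resulting goals are amenable to [ring]. *)
Lemma is_RInt_ext_R (f g : R -> R) (a b v : R) :
  (forall t, Rmin a b < t < Rmax a b -> f t = g t) -> is_RInt f a b v -> is_RInt g a b v.
Proof. exact (is_RInt_ext f g a b v). Qed.

Lemma is_RInt_plus_R (f g : R -> R) (a b u v : R) :
  is_RInt f a b u -> is_RInt g a b v -> is_RInt (fun t => f t + g t) a b (u + v).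
Proof. exact (is_RInt_plus f g a b u v). Qed.

Lemma is_RInt_scal_R (f : R -> R) (a b c v : R) :
  is_RInt f a b v -> is_RInt (fun t => c * f t) a b (c * v).
Proof. exact (is_RInt_scal f a b c v). Qed.

Lemma is_RInt_minus_R (f g : R -> R) (a b u v : R) :
  is_RInt f a b u -> is_RInt g a b v -> is_RInt (fun t => f t - g t) a b (u - v).
Proof. exact (is_RInt_minus f g a b u v). Qed.

Lemma is_RInt_beta (a b : nat) :
  is_RInt (fun t => t ^ a * (1 - t) ^ b) 0 1
    (INR (fact a) * INR (fact b) / INR (fact (a + b + 1))).
Proof.
revert a; induction b as [|b IH]; intros a.
- assert (Ha : INR (S a) <> 0) by (apply not_0_INR; lia).
  replace (INR (fact a) * INR (fact 0) / INR (fact (a + 0 + 1)))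
    with (1 ^ S a / INR (S a) - 0 ^ S a / INR (S a)).
  + apply (is_RInt_ext_R (fun t => t ^ a)), is_RInt_pow.
    intros t _; ring.
  + change (fact 0) with 1%nat.
    rewrite Nat.add_0_r, Nat.add_1_r, fact_simpl, mult_INR, pow1, pow_i, INR_1 by lia.
    field; split; [apply INR_fact_neq_0 | exact Ha].
- assert (Ha : INR (S a) <> 0) by (apply not_0_INR; lia).
  (* integration by parts against d/dt [t^(a+1) (1-t)^(b+1)] *)
  assert (Hparts : is_RInt (fun t => INR (S a) * (t ^ a * (1 - t) ^ S b)
                                    - INR (S b) * (t ^ S a * (1 - t) ^ b)) 0 1 0).
  { apply (is_RInt_derive_R (fun t => t ^ S a * (1 - t) ^ S b)); intros.
    + auto_derive; [exact I|].
      change (match a with 0%nat => 1 | S _ => INR a + 1 end) with (INR (S a)).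
      change (match b with 0%nat => 1 | S _ => INR b + 1 end) with (INR (S b)).
      unfold Rminus; cbn [pow]; ring.
    + apply ex_derive_continuous_R; auto_derive; auto.
    + rewrite pow_i, Rminus_diag, pow_i by lia; ring. }
  replace (INR (fact a) * INR (fact (S b)) / INR (fact (a + S b + 1)))
    with (/ INR (S a) * (0 + INR (S b) *
            (INR (fact (S a)) * INR (fact b) / INR (fact (S a + b + 1))))).
  + eapply is_RInt_ext_R;
      [| apply is_RInt_scal_R, is_RInt_plus_R; [exact Hparts | apply is_RInt_scal_R, IH]].
    intros t _; unfold Rminus; cbn [pow]; field; exact Ha.
  + replace (S a + b + 1)%nat with (a + S b + 1)%nat by lia.
    rewrite (fact_simpl a), (fact_simpl b), !mult_INR.
    field; split; [apply INR_fact_neq_0 | exact Ha].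
Qed.

Lemma is_RInt_sum_n (f : nat -> R -> R) (I : nat -> R) (a b : R) (N : nat) :
  (forall k, is_RInt (f k) a b (I k)) ->
  is_RInt (fun t => sum_n (fun k => f k t) N) a b (sum_n I N).
Proof.
intros Hf; induction N as [|N IH].
- rewrite sum_O; eapply is_RInt_ext_R; [| apply Hf].
  intros t _; rewrite sum_O; reflexivity.
- rewrite sum_Sn; eapply is_RInt_ext_R; [| apply (is_RInt_plus_R _ _ _ _ _ _ IH (Hf (S N)))].
  intros t _; rewrite sum_Sn; reflexivity.
Qed.

Lemma is_lim_seq_sqr_geom (q d : R) : 0 < q < 1 -> 0 < d ->
  is_lim_seq (fun N => (INR N + d) ^ 2 * q ^ N) 0.
Proof.
intros Hq Hd.
set (a := fun N => (INR N + d) ^ 2 * q ^ N).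
assert (Hpos : forall N, 0 < INR N + d) by (intros N; pose proof (pos_INR N); lra).
assert (Ha : forall N, a N <> 0).
{ intros N; apply Rgt_not_eq, Rmult_lt_0_compat; [apply pow_lt, Hpos | apply pow_lt; lra]. }
assert (Hinv : is_lim_seq (fun N => / (INR N + d)) 0).
{ replace (Finite 0) with (Rbar_inv p_infty) by reflexivity.
  apply is_lim_seq_inv; [| discriminate].
  eapply is_lim_seq_plus; [apply is_lim_seq_INR | apply is_lim_seq_const | reflexivity]. }
assert (Hratio : is_lim_seq (fun N => Rabs (a (S N) / a N)) q).
{ apply is_lim_seq_ext with (fun N => q * ((1 + / (INR N + d)) * (1 + / (INR N + d)))).
  - intros N.
    assert (HqN : q ^ N <> 0) by (apply pow_nonzero; lra).
    specialize (Hpos N).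
    replace (a (S N) / a N) with (q * ((1 + / (INR N + d)) * (1 + / (INR N + d))))
      by (unfold a; rewrite S_INR; simpl pow; field; split; lra).
    rewrite Rabs_pos_eq; [reflexivity | apply Rmult_le_pos; [lra | apply Rle_0_sqr]].
  - assert (H1 : is_lim_seq (fun N => 1 + / (INR N + d)) (1 + 0))
      by (apply is_lim_seq_plus'; [apply is_lim_seq_const | exact Hinv]).
    replace (Finite q) with (Rbar_mult q ((1 + 0) * (1 + 0))) by (simpl; f_equal; ring).
    apply is_lim_seq_scal_l, is_lim_seq_mult'; exact H1. }
apply is_lim_seq_abs_0, ex_series_lim_0, (ex_series_DAlembert a q); tauto.
Qed.

Lemma Rabs_mult_le_l (u s : R) : Rabs s <= 1 -> Rabs (u * s) <= Rabs u.
Proof.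
intros Hs; rewrite Rabs_mult.
pose proof (Rabs_pos u); pose proof (Rabs_pos s); nra.
Qed.

Definition quad (a b c x : R) : R := a * x ^ 2 + b * x + c.

(* For [|w| < 1], [quad_geom a b c x w] is the sum of [quad a b c (x + j) * w ^ j]
   over [j >= 0]: the three terms carry the zeroth, first and second forward
   differences of [quad a b c] at [x]. *)
Definition quad_geom (a b c x w : R) : R :=
  quad a b c x / (1 - w) + (2 * a * x + a + b) * w / (1 - w) ^ 2
  + 2 * a * w ^ 2 / (1 - w) ^ 3.

Section QuadGeom.

Variables a b c : R.

Lemma quad_geom_shift (x w : R) : w <> 1 ->
  quad_geom a b c x w = quad a b c x + w * quad_geom a b c (x + 1) w.
Proof. intros Hw; unfold quad_geom, quad; field; lra. Qed.

Lemma sum_n_quad_geom (w : R) (N : nat) : w <> 1 ->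
  sum_n (fun k => quad a b c (INR k) * w ^ k) N
  = quad_geom a b c 0 w - w ^ S N * quad_geom a b c (INR (S N)) w.
Proof.
intros Hw; induction N as [|N IH].
- rewrite sum_O, (quad_geom_shift 0 w Hw).
  change (?x = ?y) with (@eq R x y).
  simpl; rewrite Rplus_0_l; ring.
- rewrite sum_Sn, IH, (quad_geom_shift (INR (S N)) w Hw), <- S_INR.
  change (?x = ?y) with (@eq R x y); change plus with Rplus; simpl pow; ring.
Qed.

Lemma continuous_quad_geom (x w : R) : w <> 1 -> continuous (quad_geom a b c x) w.
Proof.
intros Hw; apply ex_derive_continuous_R; unfold quad_geom, quad.
assert (H : 1 + - w <> 0) by (intro; apply Hw; lra).
auto_derive; repeat split; repeat apply Rmult_integral_contrapositive_currified;
  try exact H; exact R1_neq_R0.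
Qed.

Lemma Rabs_quad_le (x : R) : 0 <= x ->
  Rabs (quad a b c x) <= Rabs a * x ^ 2 + Rabs b * x + Rabs c.
Proof.
intros Hx; unfold quad.
eapply Rle_trans; [apply Rabs_triang|]; apply Rplus_le_compat; [| apply Rle_refl].
eapply Rle_trans; [apply Rabs_triang|].
rewrite !Rabs_mult, (Rabs_pos_eq x), (Rabs_pos_eq (x ^ 2)) by (try apply pow2_ge_0; lra).
apply Rle_refl.
Qed.

Lemma Rabs_quad_geom_le (x w : R) : 0 <= x -> -1 <= w <= 0 ->
  Rabs (quad_geom a b c x w) <= 5 * (Rabs a + Rabs b + Rabs c) * (x + 1) ^ 2.
Proof.
intros Hx Hw; set (v := / (1 - w)).
assert (Hv : 0 < v <= 1).
{ unfold v; split; [apply Rinv_0_lt_compat; lra|].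
  rewrite <- Rinv_1; apply Rinv_le_contravar; lra. }
replace (quad_geom a b c x w) with
  (quad a b c x * v + (2 * a * x + a + b) * (w * v ^ 2) + 2 * a * (w ^ 2 * v ^ 3))
  by (unfold quad_geom, v; field; lra).
assert (H1 : Rabs (quad a b c x * v) <= Rabs (quad a b c x))
  by (apply Rabs_mult_le_l; rewrite Rabs_pos_eq; lra).
assert (H2 : Rabs ((2 * a * x + a + b) * (w * v ^ 2)) <= Rabs (2 * a * x + a + b))
  by (apply Rabs_mult_le_l, Rabs_le; split; nra).
assert (H3 : Rabs (2 * a * (w ^ 2 * v ^ 3)) <= Rabs (2 * a)).
{ apply Rabs_mult_le_l, Rabs_le.
  assert (0 <= w ^ 2 <= 1) by nra; assert (0 <= v ^ 3 <= 1) by (simpl; nra); nra. }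
assert (H4 : Rabs (2 * a * x + a + b) <= 2 * Rabs a * x + Rabs a + Rabs b).
{ eapply Rle_trans; [apply Rabs_triang|]; apply Rplus_le_compat; [| apply Rle_refl].
  eapply Rle_trans; [apply Rabs_triang|].
  rewrite !Rabs_mult, (Rabs_pos_eq x), (Rabs_pos_eq 2) by lra; lra. }
pose proof (Rabs_quad_le x Hx) as H5.
rewrite (Rabs_mult 2 a), (Rabs_pos_eq 2) in H3 by lra.
pose proof (Rabs_pos a); pose proof (Rabs_pos b); pose proof (Rabs_pos c).
eapply Rle_trans; [apply Rabs_triang|].
eapply Rle_trans; [apply Rplus_le_compat_r, Rabs_triang|].
simpl pow in *; nra.
Qed.

End QuadGeom.

Section QuadGeomIntegral.

Variables (a b c q : R) (w : R -> R).
Hypothesis Hq : 0 < q < 1.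
Hypothesis w_continuous : forall t, continuous w t.
Hypothesis w_range : forall t, 0 <= t <= 1 -> - q <= w t <= 0.

Let w_neq_1 (t : R) : 0 <= t <= 1 -> w t <> 1.
Proof. intros Ht; specialize (w_range t Ht); lra. Qed.

Let continuous_quad_geom_w (x t : R) : 0 <= t <= 1 ->
  continuous (fun s => quad_geom a b c x (w s)) t.
Proof.
intros Ht; apply continuous_comp;
  [apply w_continuous | apply continuous_quad_geom, w_neq_1, Ht].
Qed.

Let continuous_pow_w (m : nat) (t : R) : continuous (fun s => w s ^ m) t.
Proof.
apply (continuous_comp w (fun y => y ^ m)); [apply w_continuous|].
apply ex_derive_continuous_R; auto_derive; exact I.
Qed.

Let ex_RInt_01 (f : R -> R) : (forall t, 0 <= t <= 1 -> continuous f t) -> ex_RInt f 0 1.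
Proof.
intros Hf; apply (ex_RInt_continuous (V := R_CompleteNormedModule)).
rewrite Rmin_left, Rmax_right by lra; exact Hf.
Qed.

Let ex_RInt_quad_pow (k : nat) : ex_RInt (fun t => quad a b c (INR k) * w t ^ k) 0 1.
Proof.
apply ex_RInt_01; intros t _.
apply (continuous_mult (K := R_AbsRing)); [apply continuous_const | apply continuous_pow_w].
Qed.

Let ex_RInt_pow_quad_geom (m : nat) (x : R) :
  ex_RInt (fun t => w t ^ m * quad_geom a b c x (w t)) 0 1.
Proof.
apply ex_RInt_01; intros t Ht.
apply (continuous_mult (K := R_AbsRing));
  [apply continuous_pow_w | apply continuous_quad_geom_w, Ht].
Qed.

Definition quad_geom_remainder (N : nat) : R :=
  RInt (fun t => w t ^ S N * quad_geom a b c (INR (S N)) (w t)) 0 1.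

Lemma sum_n_RInt_quad_geom (N : nat) :
  sum_n (fun k => RInt (fun t => quad a b c (INR k) * w t ^ k) 0 1) N
  = RInt (fun t => quad_geom a b c 0 (w t)) 0 1 - quad_geom_remainder N.
Proof.
assert (Hsum : is_RInt (fun t => sum_n (fun k => quad a b c (INR k) * w t ^ k) N) 0 1
  (sum_n (fun k => RInt (fun t => quad a b c (INR k) * w t ^ k) 0 1) N)).
{ apply (is_RInt_sum_n (fun k t => quad a b c (INR k) * w t ^ k)); intros k.
  apply (RInt_correct (V := R_CompleteNormedModule)), ex_RInt_quad_pow. }
assert (Hdiff := is_RInt_minus_R _ _ 0 1 _ _
  (RInt_correct (V := R_CompleteNormedModule) _ 0 1 (ex_RInt_01 _ (continuous_quad_geom_w 0)))
  (RInt_correct (V := R_CompleteNormedModule) _ 0 1 (ex_RInt_pow_quad_geom (S N) (INR (S N))))).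
rewrite <- (is_RInt_unique _ _ _ _ Hsum); apply is_RInt_unique.
eapply is_RInt_ext_R; [| exact Hdiff].
rewrite Rmin_left, Rmax_right by lra; intros t Ht.
rewrite sum_n_quad_geom; [reflexivity | apply w_neq_1; lra].
Qed.

Lemma Rabs_quad_geom_remainder_le (N : nat) :
  Rabs (quad_geom_remainder N)
  <= q * (5 * (Rabs a + Rabs b + Rabs c)) * ((INR N + 2) ^ 2 * q ^ N).
Proof.
set (K := 5 * (Rabs a + Rabs b + Rabs c)).
replace (q * K * ((INR N + 2) ^ 2 * q ^ N))
  with ((1 - 0) * (q ^ S N * (K * (INR (S N) + 1) ^ 2))) by (rewrite S_INR; simpl pow; ring).
apply abs_RInt_le_const; [lra | apply ex_RInt_pow_quad_geom |].
intros t Ht; specialize (w_range t Ht).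
rewrite Rabs_mult, <- RPow_abs.
apply Rmult_le_compat; [apply pow_le, Rabs_pos | apply Rabs_pos | |].
- apply pow_incr; split; [apply Rabs_pos | apply Rabs_le; lra].
- apply Rabs_quad_geom_le; [apply pos_INR | lra].
Qed.

Lemma is_series_RInt_quad_geom :
  is_series (fun k => RInt (fun t => quad a b c (INR k) * w t ^ k) 0 1)
    (RInt (fun t => quad_geom a b c 0 (w t)) 0 1).
Proof.
set (L := RInt (fun t => quad_geom a b c 0 (w t)) 0 1).
set (K := 5 * (Rabs a + Rabs b + Rabs c)).
assert (Hrem : is_lim_seq quad_geom_remainder 0).
{ apply is_lim_seq_abs_0,
    (is_lim_seq_le_le (fun _ => 0) _ (fun N => q * K * ((INR N + 2) ^ 2 * q ^ N))).
  - intros N; split; [apply Rabs_pos | apply Rabs_quad_geom_remainder_le].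
  - apply is_lim_seq_const.
  - replace (Finite 0) with (Rbar_mult (q * K) 0) by (simpl; f_equal; ring).
    apply is_lim_seq_scal_l, is_lim_seq_sqr_geom; lra. }
assert (H := is_lim_seq_minus' _ _ L 0 (is_lim_seq_const L) Hrem).
rewrite Rminus_0_r in H.
eapply is_lim_seq_ext in H; [exact H |].
intros N; symmetry; apply sum_n_RInt_quad_geom.
Qed.

End QuadGeomIntegral.

Definition ratio (n : R) : R := (n - 1) ^ 4 / (n * (n + 1) ^ 2).

Definition kernel (n t : R) : R := - ratio n * (t * (1 - t)) ^ 2.

Definition slope (n : R) : R := 2 * (n ^ 2 + 6 * n + 1) ^ 2 * (n ^ 2 - 10 * n + 1).

Definition summand (n x : R) : R := quad (4 * slope n) (slope n + 4 * Ppoly n) (Ppoly n) x.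

Lemma ratio_pos (n : R) : 1 < n -> 0 < ratio n.
Proof.
intros Hn; unfold ratio; apply Rdiv_lt_0_compat; [apply pow_lt; lra|].
apply Rmult_lt_0_compat; [lra | apply pow_lt; lra].
Qed.

Lemma term_eq_beta (n : R) (k : nat) : 1 < n ->
  term n k = summand n (INR k) * (- ratio n) ^ k
             * (INR (fact (2 * k)) * INR (fact (2 * k)) / INR (fact (2 * k + 2 * k + 1))).
Proof.
intros Hn; unfold term, binom4k2k, Binomial.C, summand, quad, slope, ratio.
replace (4 * k - 2 * k)%nat with (2 * k)%nat by lia.
replace (2 * k + 2 * k + 1)%nat with (S (4 * k)) by lia.
rewrite fact_simpl, mult_INR, S_INR, mult_INR.
replace (- ((n - 1) ^ 4 / (n * (n + 1) ^ 2))) with ((n - 1) ^ 4 * / (- n * (n + 1) ^ 2))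
  by (field; lra).
rewrite Rpow_mult_distr, pow_inv, Rpow_mult_distr, <- !pow_mult.
replace (INR 4) with 4 by (simpl; ring).
assert ((- n) ^ k <> 0) by (apply pow_nonzero; lra).
assert ((n + 1) ^ (2 * k) <> 0) by (apply pow_nonzero; lra).
assert ((n - 1) ^ (4 * k) <> 0) by (apply pow_nonzero; lra).
pose proof (INR_fact_neq_0 (2 * k)); pose proof (INR_fact_neq_0 (4 * k)); pose proof (pos_INR k).
field; repeat split; auto; lra.
Qed.

Lemma is_RInt_term (n : R) (k : nat) : 1 < n ->
  is_RInt (fun t => summand n (INR k) * kernel n t ^ k) 0 1 (term n k).
Proof.
intros Hn; rewrite term_eq_beta by exact Hn.
eapply is_RInt_ext_R; [| apply is_RInt_scal_R, is_RInt_beta].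
intros t _; unfold kernel.
rewrite Rpow_mult_distr, <- pow_mult, Rpow_mult_distr; ring.
Qed.

Lemma kernel_range (n t : R) : 1 < n -> 0 <= t <= 1 ->
  - (ratio n / 16) <= kernel n t <= 0.
Proof.
intros Hn Ht; unfold kernel; pose proof (ratio_pos n Hn).
assert (Hu : 0 <= t * (1 - t) <= 1 / 4).
{ split; [apply Rmult_le_pos; lra|].
  pose proof (pow2_ge_0 (t - 1 / 2)); simpl in *; nra. }
assert (0 <= (t * (1 - t)) ^ 2 <= 1 / 16)
  by (split; [apply pow2_ge_0 | simpl; rewrite Rmult_1_r; nra]).
split; nra.
Qed.

Definition antiderivative (n t : R) : R :=
  3 * n * (n + 1) * (n - 1) ^ 3
    * (ln (((n - 1) * t + 1) ^ 2 + n) - ln (((n - 1) * t - n) ^ 2 + n))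
  + (1 - 2 * t) *
    ((16 * n - 32 * n ^ 2 - 96 * n ^ 3 - 32 * n ^ 4 + 16 * n ^ 5)
     + (1 - 38 * n + 143 * n ^ 2 - 212 * n ^ 3 + 143 * n ^ 4 - 38 * n ^ 5 + n ^ 6) * (t * (1 - t))
     + (32 - 352 * n + 1120 * n ^ 2 - 1600 * n ^ 3 + 1120 * n ^ 4 - 352 * n ^ 5 + 32 * n ^ 6)
       * (t * (1 - t)) ^ 2
     - 3 * (n - 1) ^ 10 / (n * (n + 1) ^ 2) * (t * (1 - t)) ^ 3)
    / (1 + ratio n * (t * (1 - t)) ^ 2) ^ 2.

Lemma is_derive_antiderivative (n t : R) : 1 < n ->
  is_derive (antiderivative n) t
    (quad_geom (4 * slope n) (slope n + 4 * Ppoly n) (Ppoly n) 0 (kernel n t)).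
Proof.
intros Hn.
assert (Hq1 : 0 < ((n - 1) * t + 1) ^ 2 + n) by (pose proof (pow2_ge_0 ((n - 1) * t + 1)); lra).
assert (Hq2 : 0 < ((n - 1) * t - n) ^ 2 + n) by (pose proof (pow2_ge_0 ((n - 1) * t - n)); lra).
assert (Hden : 0 < 1 + ratio n * (t * (1 - t)) ^ 2).
{ pose proof (ratio_pos n Hn); pose proof (pow2_ge_0 (t * (1 - t))).
  assert (0 <= ratio n * (t * (1 - t)) ^ 2) by (apply Rmult_le_pos; lra); lra. }
assert (Hden' : 0 < n * (n + 1) ^ 2 + (n - 1) ^ 4 * (t * (1 - t)) ^ 2).
{ replace (n * (n + 1) ^ 2 + (n - 1) ^ 4 * (t * (1 - t)) ^ 2)
    with (n * (n + 1) ^ 2 * (1 + ratio n * (t * (1 - t)) ^ 2)) by (unfold ratio; field; lra).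
  apply Rmult_lt_0_compat; [apply Rmult_lt_0_compat; [| apply pow_lt]; lra | exact Hden]. }
unfold antiderivative, quad_geom, quad, kernel, slope, ratio, Ppoly in *.
auto_derive.
- unfold Rminus in *; simpl in *; repeat split; try lra.
  apply Rmult_integral_contrapositive; split; lra.
- field; repeat split; lra.
Qed.

Lemma continuous_kernel (n t : R) : continuous (kernel n) t.
Proof. apply ex_derive_continuous_R; unfold kernel; auto_derive; exact I. Qed.

Lemma is_RInt_antiderivative (n : R) : 1 < n ->
  is_RInt (fun t => quad_geom (4 * slope n) (slope n + 4 * Ppoly n) (Ppoly n) 0 (kernel n t))
    0 1
    (6 * n * (n + 1) * (n - 1) ^ 3 * ln n - 32 * n * (n + 1) ^ 2 * (n ^ 2 - 4 * n + 1)).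
Proof.
intros Hn; apply (is_RInt_derive_R (antiderivative n)).
- intros t; apply is_derive_antiderivative, Hn.
- intros t; apply continuous_comp; [apply continuous_kernel | apply continuous_quad_geom].
  unfold kernel; pose proof (ratio_pos n Hn); pose proof (pow2_ge_0 (t * (1 - t))); nra.
- unfold antiderivative, ratio.
  replace (((n - 1) * 1 + 1) ^ 2 + n) with (n * (n + 1)) by ring.
  replace (((n - 1) * 1 - n) ^ 2 + n) with (n + 1) by ring.
  replace (((n - 1) * 0 + 1) ^ 2 + n) with (n + 1) by ring.
  replace (((n - 1) * 0 - n) ^ 2 + n) with (n * (n + 1)) by ring.
  rewrite ln_mult by lra.
  field; lra.
Qed.

(* With [a = (n-1)^2] and [b = (n+1)^2] the hypothesis reads [b > s^2 a] with
   [s^2 = (1 + sqrt 2) / 2], the positive root of [4 r^2 - 4 r - 1], whereas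
   [ratio n < 16] reads [4 b^2 - 4 a b - a^2 > 0]. *)
Lemma ratio_lt_16 (n : R) : 1 < n -> n < upper_bound -> ratio n < 16.
Proof.
intros Hn Hub; unfold upper_bound in Hub.
set (r := sqrt 2) in *; set (s := sqrt ((1 + r) / 2)) in *.
assert (Hr2 : r * r = 2) by (apply sqrt_sqrt; lra).
assert (Hr : 1 < r) by (pose proof (sqrt_pos 2) as H0; fold r in H0; nra).
assert (Hs2 : s * s = (1 + r) / 2) by (apply sqrt_sqrt; lra).
assert (Hs : 1 < s) by (pose proof (sqrt_pos ((1 + r) / 2)) as H0; fold s in H0; nra).
assert (Hlin : s * (n - 1) < n + 1).
{ apply (Rmult_lt_compat_r (s - 1)) in Hub; [| lra].
  replace ((s + 1) / (s - 1) * (s - 1)) with (s + 1) in Hub by (field; lra); lra. }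
set (a := (n - 1) * (n - 1)); set (b := (n + 1) * (n + 1)).
assert (Hsq : s * s * a < b).
{ assert (0 < s * (n - 1)) by (apply Rmult_lt_0_compat; lra).
  unfold a, b; nra. }
rewrite Hs2 in Hsq.
assert (Ha : 0 < a) by (unfold a; nra).
assert (Hroots : 0 < (b - (1 + r) / 2 * a) * (b - (1 - r) / 2 * a))
  by (apply Rmult_lt_0_compat; [lra | unfold b; nra]).
replace ((b - (1 + r) / 2 * a) * (b - (1 - r) / 2 * a))
  with (b * b - a * b - (r * r - 1) / 4 * a * a) in Hroots by field.
rewrite Hr2 in Hroots.
unfold ratio; apply Rmult_lt_reg_r with (n * (n + 1) ^ 2);
  [apply Rmult_lt_0_compat; [| apply pow_lt]; lra|].
replace ((n - 1) ^ 4 / (n * (n + 1) ^ 2) * (n * (n + 1) ^ 2)) with (a * a)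
  by (unfold a; field; lra).
replace (16 * (n * (n + 1) ^ 2)) with (4 * (b - a) * b) by (unfold a, b; ring).
nra.
Qed.

Theorem corollary1p3 (n : R) (h1 : 1 < n) (h2 : n < upper_bound) :
  is_series (term n)
    (6 * n * (n + 1) * (n - 1)^3 * ln n - 32 * n * (n + 1)^2 * (n^2 - 4*n + 1)).
Proof.
assert (Hq : 0 < ratio n / 16 < 1)
  by (pose proof (ratio_pos n h1); pose proof (ratio_lt_16 n h1 h2); lra).
assert (Hser := is_series_RInt_quad_geom (4 * slope n) (slope n + 4 * Ppoly n) (Ppoly n)
  (ratio n / 16) (kernel n) Hq (continuous_kernel n) (fun t => kernel_range n t h1)).
rewrite (is_RInt_unique _ _ _ _ (is_RInt_antiderivative n h1)) in Hser.
eapply is_series_ext; [| exact Hser].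
intros k; apply is_RInt_unique, is_RInt_term, h1.
Qed.
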